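(* Let $\kappa$ be a regular uncountable cardinal. If $\kappa$ carries a uniform normal 2-precipitous ideal, then $\kappa\to_{hc}[\kappa]^2_{\omega,2}$.
   Context: An ideal $I$ on $\kappa$ is uniform if it contains every subset of $\kappa$ of size $<\kappa$; it is normal if for every sequence $\langle X_\alpha:\alpha<\kappa\rangle$ of members of $I$, the diagonal union $\{\beta<\kappa:\exists\alpha<\beta\ (\beta\in X_\alpha)\}$ is in $I$. The game $G_I$: Players Empty and Nonempty alternate, Empty moving first, producing a coordinatewise $\subseteq$-decreasing sequence $\langle (A_n,B_n):n\in\omega\rangle$ of pairs of $I$-positive sets; Nonempty wins iff there exist $\alpha<\beta$ with $\alpha\in\bigcap_n A_n$, $\beta\in\bigcap_n B_n$. $I$ is 2-precipitous if Empty has no winning strategy in $G_I$. A graph $(X,E)$ is highly connected if for every $Y\subseteq X$ with $|Y|<|X|$ the induced subgraph on $X\setminus Y$ is connected. For $k\in\omega$, $\kappa\to_{hc}[\kappa]^2_{\omega,k}$ means: for every $c:[\kappa]^2\to\omega$ there exist $H\in[\kappa]^\kappa$ and $K\in[\omega]^k$ such that $(H,c^{-1}(K)\cap[H]^2)$ is highly connected. *)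

(* A cardinal kappa is represented by a type K carrying a
   strict well-order [lt] of order type kappa (an initial ordinal).
   Subsets of kappa are predicates K -> Prop. *)
From Stdlib Require Import List Relations.

Section Defs.
Variable K : Type.
Variable lt : K -> K -> Prop.

Definition subset_of (A B : K -> Prop) : Prop := forall x, A x -> B x.

Definition card_le (A B : K -> Prop) : Prop :=
  exists f : K -> K, (forall x, A x -> B (f x)) /\
    (forall x y, A x -> A y -> f x = f y -> x = y).

Definition card_lt (A B : K -> Prop) : Prop := ~ card_le B A.

Definition fullK : K -> Prop := fun _ => True.

Definition regular_uncountable_cardinal : Prop :=
  well_founded lt /\
  (forall x y z, lt x y -> lt y z -> lt x z) /\
  (forall x y, lt x y \/ x = y \/ lt y x) /\
  (* initial ordinal: every proper initial segment has size < kappa *)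
  (forall x, card_lt (fun y => lt y x) fullK) /\
  ~ (exists f : K -> nat, forall x y, f x = f y -> x = y) /\
  (forall X, card_lt X fullK -> exists b, forall x, X x -> lt x b).

Definition is_ideal (I : (K -> Prop) -> Prop) : Prop :=
  I (fun _ => False) /\
  (forall X Y, I Y -> subset_of X Y -> I X) /\
  (forall X Y, I X -> I Y -> I (fun x => X x \/ Y x)) /\
  ~ I fullK.

Definition uniform (I : (K -> Prop) -> Prop) : Prop :=
  forall X, card_lt X fullK -> I X.

Definition normal (I : (K -> Prop) -> Prop) : Prop :=
  forall F : K -> (K -> Prop), (forall a, I (F a)) ->
    I (fun b => exists a, lt a b /\ F a b).

Definition positive (I : (K -> Prop) -> Prop) (X : K -> Prop) : Prop := ~ I X.

(* The game G_I.  A play is p : nat -> (A_n, B_n); Empty plays the even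
   moves p (2n), Nonempty plays the odd moves p (2n+1). *)
Definition move := ((K -> Prop) * (K -> Prop))%type.

Definition legal_move (I : (K -> Prop) -> Prop) (p : nat -> move) (m : nat) : Prop :=
  positive I (fst (p m)) /\ positive I (snd (p m)) /\
  match m with
  | 0 => True
  | S m' => subset_of (fst (p m)) (fst (p m')) /\ subset_of (snd (p m)) (snd (p m'))
  end.

Definition strategy := list move -> move.

Definition follows (sigma : strategy) (p : nat -> move) : Prop :=
  forall n, p (2 * n) = sigma (map p (seq 0 (2 * n))).

Definition nonempty_wins_play (p : nat -> move) : Prop :=
  exists a b, lt a b /\ (forall n, fst (p n) a) /\ (forall n, snd (p n) b).

Definition empty_winning (I : (K -> Prop) -> Prop) (sigma : strategy) : Prop :=
  forall p, follows sigma p ->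
    (forall n, (forall j, j < n -> legal_move I p (2 * j + 1)) -> legal_move I p (2 * n)) /\
    ((forall j, legal_move I p (2 * j + 1)) -> ~ nonempty_wins_play p).

Definition two_precipitous (I : (K -> Prop) -> Prop) : Prop :=
  ~ exists sigma, empty_winning I sigma.

Definition connected (V : K -> Prop) (E : K -> K -> Prop) : Prop :=
  forall x y, V x -> V y ->
    clos_refl_trans K (fun a b => V a /\ V b /\ E a b) x y.

Definition highly_connected (X : K -> Prop) (E : K -> K -> Prop) : Prop :=
  forall Y, subset_of Y X -> card_lt Y X ->
    connected (fun x => X x /\ ~ Y x) E.

(* c : [kappa]^2 -> omega is represented by c : K -> K -> nat, the colour of
   {a, b} with a < b being c a b.  Edge set c^{-1}(S) on K. *)
Definition colour_graph (c : K -> K -> nat) (S : nat -> Prop) (x y : K) : Prop :=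
  (lt x y /\ S (c x y)) \/ (lt y x /\ S (c y x)).

Definition hc_arrow (k : nat) : Prop :=
  forall c : K -> K -> nat,
    exists (H : K -> Prop) (S : list nat),
      card_le fullK H /\ NoDup S /\ length S = k /\
      highly_connected H (colour_graph c (fun n => In n S)).
End Defs.

(* Write N_k(B, x) for the set of y in B with x < y and c(x, y) = k.  Say
   that colour k is dense from A to B when every J-positive A' <= A and
   B' <= B contain a < b with c(a, b) = k.
   - 2-precipitousness: below any pair of positive sets there is a pair
     (A, B) and a colour k dense from A to B; otherwise Empty wins G_J by
     shrinking, at her n-th move, the current pair so as to kill colour n.
   - Normality: if k is dense from A to B, then for A' <= A and positive
     B' <= B, the "poor" points x of A' whose N_k(B', x) is null form a
     null set (a diagonal union argument).
   Applying the first fact twice gives positive A, B with colours k dense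
   from A to B and i dense from B to A.  Let H consist of the points of A
   with positive N_k(B, x) together with the points of B with positive
   N_i(A, x).  H is positive, hence of size kappa by uniformity; a set of
   size < |H| is null, and removing a null set from H leaves it connected
   in the graph of the colours {i, k}, by paths of length at most 6. *)
From Stdlib Require Import List Relations Classical ClassicalEpsilon Lia Arith.
Import ListNotations.

Lemma clos_refl_trans_sym (T : Type) (R : T -> T -> Prop) :
  (forall a b, R a b -> R b a) ->
  forall x y, clos_refl_trans T R x y -> clos_refl_trans T R y x.
Proof.
  intros Rsym x y Hxy.
  induction Hxy; [apply rt_step; auto | apply rt_refl | eapply rt_trans; eauto].
Qed.

Section Ideals.
Variable K : Type.
Variable J : (K -> Prop) -> Prop.
Hypothesis J_ideal : is_ideal K J.

Lemma null_subset (X Y : K -> Prop) : J Y -> subset_of K X Y -> J X.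
Proof. destruct J_ideal as [_ [Hdown _]]. eauto. Qed.

Lemma null_union (X Y : K -> Prop) : J X -> J Y -> J (fun x => X x \/ Y x).
Proof. destruct J_ideal as [_ [_ [Hunion _]]]. auto. Qed.

Lemma positive_inhabited (X : K -> Prop) : ~ J X -> exists x, X x.
Proof.
  intros HX. apply NNPP. intros Hempty. apply HX.
  apply (null_subset X (fun _ => False)); [apply J_ideal |].
  intros x Hx. apply Hempty. eauto.
Qed.

Lemma positive_minus_null (X N : K -> Prop) :
  ~ J X -> J N -> ~ J (fun x => X x /\ ~ N x).
Proof.
  intros HX HN Hrest. apply HX.
  apply (null_subset X (fun x => (X x /\ ~ N x) \/ N x)).
  - apply null_union; assumption.
  - intros x Hx. destruct (classic (N x)); auto.
Qed.

Lemma positive_avoid (X N : K -> Prop) : ~ J X -> J N -> exists x, X x /\ ~ N x.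
Proof. intros HX HN. apply positive_inhabited, positive_minus_null; assumption. Qed.

End Ideals.

Section Colouring.
Variable K : Type.
Variable lt : K -> K -> Prop.
Variable J : (K -> Prop) -> Prop.
Variable c : K -> K -> nat.
Hypothesis J_ideal : is_ideal K J.

Definition up_nbhd (k : nat) (B : K -> Prop) (x : K) : K -> Prop :=
  fun y => lt x y /\ c x y = k /\ B y.

Definition poor (k : nat) (A B : K -> Prop) (x : K) : Prop :=
  A x /\ J (up_nbhd k B x).

Definition rich (k : nat) (A B : K -> Prop) (x : K) : Prop :=
  A x /\ ~ J (up_nbhd k B x).

Definition dense_colour (A B : K -> Prop) (k : nat) : Prop :=
  forall A' B', subset_of K A' A -> subset_of K B' B -> ~ J A' -> ~ J B' ->
    exists a b, A' a /\ B' b /\ lt a b /\ c a b = k.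

Lemma dense_colour_mono (A B A1 B1 : K -> Prop) (k : nat) :
  dense_colour A1 B1 k -> subset_of K A A1 -> subset_of K B B1 ->
  dense_colour A B k.
Proof.
  intros Hdense HA HB A' B' HA' HB'. apply Hdense; intros x Hx; auto.
Qed.

Lemma up_nbhd_mono (k : nat) (B B' : K -> Prop) (x : K) :
  subset_of K B' B -> subset_of K (up_nbhd k B' x) (up_nbhd k B x).
Proof. intros HB y [Hxy [Hc Hy]]. repeat split; auto. Qed.

(* Normality: the poor points of A' (relative to B') form a null set.  If
   not, the diagonal union of the null neighbourhoods N_k(B', x), x poor,
   is null, and density yields a poor a and some b in B' outside that
   union with c(a, b) = k, which is absurd. *)
Lemma poor_null (A B A' B' : K -> Prop) (k : nat) :
  normal K lt J -> dense_colour A B k ->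
  subset_of K A' A -> subset_of K B' B -> ~ J B' -> J (poor k A' B').
Proof.
  intros Hnormal Hdense HA' HB' HposB'. apply NNPP. intros Hpos.
  pose (F := fun a b => poor k A' B' a /\ up_nbhd k B' a b).
  assert (HF : forall a, J (F a)).
  { intros a. destruct (classic (poor k A' B' a)) as [Ha | Ha].
    - apply (null_subset K J J_ideal _ (up_nbhd k B' a)); [apply Ha |].
      intros b [_ Hb]. exact Hb.
    - apply (null_subset K J J_ideal _ (fun _ => False)); [apply J_ideal |].
      intros b [Hb _]. exact (Ha Hb). }
  destruct (Hdense (poor k A' B') (fun b => B' b /\ ~ exists a, lt a b /\ F a b))
    as [a [b [Ha [[Hb Hout] [Hab Hc]]]]].
  - intros x [Hx _]. auto.
  - intros x [Hx _]. auto.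
  - exact Hpos.
  - apply positive_minus_null; [exact J_ideal | exact HposB' | exact (Hnormal F HF)].
  - apply Hout. exists a. split; [exact Hab |]. split; [exact Ha |]. repeat split; auto.
Qed.

Lemma rich_positive (A B : K -> Prop) (k : nat) :
  normal K lt J -> dense_colour A B k -> ~ J A -> ~ J B -> ~ J (rich k A B).
Proof.
  intros Hnormal Hdense HA HB Hnull. apply HA.
  apply (null_subset K J J_ideal A (fun x => rich k A B x \/ poor k A B x)).
  - apply null_union; [exact J_ideal | exact Hnull |].
    apply (poor_null A B); auto; intros x Hx; exact Hx.
  - intros x Hx. destruct (classic (J (up_nbhd k B x))); [right | left]; split; auto.
Qed.

(* Empty's strategy when no dense colour exists below (A0, B0). *)
Section ShrinkingStrategy.
Variables A0 B0 : K -> Prop.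
Hypotheses (A0_pos : ~ J A0) (B0_pos : ~ J B0).
Hypothesis no_dense : forall A B k,
  subset_of K A A0 -> subset_of K B B0 -> ~ J A -> ~ J B -> ~ dense_colour A B k.

Definition good (m : move K) : Prop :=
  subset_of K (fst m) A0 /\ subset_of K (snd m) B0 /\ ~ J (fst m) /\ ~ J (snd m).

Definition kills (m : move K) (k : nat) (m' : move K) : Prop :=
  subset_of K (fst m') (fst m) /\ subset_of K (snd m') (snd m) /\
  ~ J (fst m') /\ ~ J (snd m') /\
  forall a b, fst m' a -> snd m' b -> lt a b -> c a b <> k.

Lemma kills_exists (m : move K) (k : nat) : good m -> exists m', kills m k m'.
Proof.
  intros [HA [HB [HposA HposB]]].
  apply NNPP. intros Hnone.
  apply (no_dense (fst m) (snd m) k HA HB HposA HposB).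
  intros A' B' HA' HB' HposA' HposB'. apply NNPP. intros Hno_pair.
  apply Hnone. exists (A', B'). repeat split; simpl; auto.
  intros a b Ha Hb Hab Hc. apply Hno_pair. exists a, b. auto.
Qed.

Definition shrink (m : move K) (k : nat) : move K :=
  epsilon (inhabits m) (kills m k).

Lemma shrink_kills (m : move K) (k : nat) : good m -> kills m k (shrink m k).
Proof. intros Hm. unfold shrink. apply epsilon_spec, kills_exists, Hm. Qed.

Lemma shrink_good (m : move K) (k : nat) : good m -> good (shrink m k).
Proof.
  intros Hm. destruct (shrink_kills m k Hm) as [H1 [H2 [H3 [H4 _]]]].
  destruct Hm as [HA [HB _]]. repeat split; auto; intros x Hx; auto.
Qed.

(* At her n-th move Empty kills colour n inside the last move played. *)
Definition sigma : strategy K :=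
  fun h => shrink (last h (A0, B0)) (Nat.div2 (length h)).

(* The position Empty answers at her n-th move. *)
Definition previous (p : nat -> move K) (n : nat) : move K :=
  match n with 0 => (A0, B0) | S m => p (2 * m + 1) end.

Lemma sigma_move (p : nat -> move K) (n : nat) :
  follows K sigma p -> p (2 * n) = shrink (previous p n) n.
Proof.
  intros Hfollow. rewrite Hfollow. unfold sigma.
  rewrite length_map, length_seq, Nat.div2_double.
  destruct n as [| m]; [reflexivity |].
  replace (2 * S m) with (S (2 * m + 1)) by lia.
  rewrite seq_S, map_app. simpl map at 2. rewrite last_last. reflexivity.
Qed.

Lemma legal_odd_refines (p : nat -> move K) (m : nat) :
  legal_move K J p (2 * m + 1) -> ~ J (fst (p (2 * m + 1))) /\ ~ J (snd (p (2 * m + 1))) /\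
  subset_of K (fst (p (2 * m + 1))) (fst (p (2 * m))) /\
  subset_of K (snd (p (2 * m + 1))) (snd (p (2 * m))).
Proof.
  replace (2 * m + 1) with (S (2 * m)) by lia. intros [H1 [H2 [H3 H4]]]. auto.
Qed.

Lemma previous_good (p : nat -> move K) (n : nat) :
  follows K sigma p -> (forall j, j < n -> legal_move K J p (2 * j + 1)) ->
  good (previous p n).
Proof.
  intros Hfollow. induction n as [| m IH]; intros Hlegal.
  - repeat split; simpl; auto; intros x Hx; exact Hx.
  - destruct (legal_odd_refines p m (Hlegal m ltac:(lia))) as [H1 [H2 [H3 H4]]].
    assert (Hgood : good (p (2 * m))).
    { rewrite (sigma_move p m Hfollow). apply shrink_good, IH.
      intros j Hj. apply Hlegal. lia. }
    destruct Hgood as [G1 [G2 _]].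
    repeat split; simpl; auto; intros x Hx; auto.
Qed.

Lemma sigma_winning : empty_winning K lt J sigma.
Proof.
  intros p Hfollow. split.
  - intros n Hlegal.
    pose proof (previous_good p n Hfollow Hlegal) as Hprev.
    destruct (shrink_kills _ n Hprev) as [H1 [H2 [H3 [H4 _]]]].
    rewrite <- (sigma_move p n Hfollow) in H1, H2, H3, H4.
    split; [exact H3 | split; [exact H4 |]].
    destruct n as [| m]; [exact Logic.I |].
    simpl previous in H1, H2.
    replace (2 * S m) with (S (2 * m + 1)) in * by lia. split; assumption.
  - intros Hlegal [a [b [Hab [Ha Hb]]]].
    pose proof (previous_good p (c a b) Hfollow (fun j _ => Hlegal j)) as Hprev.
    destruct (shrink_kills _ (c a b) Hprev) as [_ [_ [_ [_ Hkill]]]].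
    rewrite <- (sigma_move p (c a b) Hfollow) in Hkill.
    exact (Hkill a b (Ha _) (Hb _) Hab eq_refl).
Qed.

End ShrinkingStrategy.

Lemma dense_colour_exists (A0 B0 : K -> Prop) :
  two_precipitous K lt J -> ~ J A0 -> ~ J B0 ->
  exists A B k, subset_of K A A0 /\ subset_of K B B0 /\ ~ J A /\ ~ J B /\
    dense_colour A B k.
Proof.
  intros Hprec HA0 HB0. apply NNPP. intros Hnone. apply Hprec.
  exists (sigma A0 B0). apply sigma_winning; auto.
  intros A B k HA HB HposA HposB Hdense. apply Hnone. exists A, B, k. auto.
Qed.

Section HighlyConnectedSet.
Variables A B : K -> Prop.
Variables i k : nat.
Variable S : nat -> Prop.
Hypothesis J_normal : normal K lt J.
Hypotheses (A_pos : ~ J A) (B_pos : ~ J B).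
Hypotheses (k_dense : dense_colour A B k) (i_dense : dense_colour B A i).
Hypotheses (S_k : S k) (S_i : S i).

Definition core (x : K) : Prop := rich k A B x \/ rich i B A x.

Lemma core_positive : ~ J core.
Proof.
  intros Hnull. apply (rich_positive A B k); auto.
  apply (null_subset K J J_ideal _ core Hnull). intros x Hx. left. exact Hx.
Qed.

Section RemoveNullSet.
Variable Y : K -> Prop.
Hypothesis Y_null : J Y.

Let V (x : K) : Prop := core x /\ ~ Y x.
Let step (a b : K) : Prop := V a /\ V b /\ colour_graph K lt c S a b.
Let joined : K -> K -> Prop := clos_refl_trans K step.

Lemma joined_sym (x y : K) : joined x y -> joined y x.
Proof.
  apply clos_refl_trans_sym. intros a b [Ha [Hb Hab]].
  split; [exact Hb | split; [exact Ha |]]. destruct Hab; [right | left]; exact H.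
Qed.

Lemma joined_edge (a b : K) (n : nat) :
  V a -> V b -> lt a b -> c a b = n -> S n -> joined a b.
Proof.
  intros Ha Hb Hab Hc Hn. apply rt_step.
  split; [exact Ha | split; [exact Hb |]]. left. split; [exact Hab |]. rewrite Hc. exact Hn.
Qed.

Lemma rich_B_of (x : K) : B x -> ~ poor i B A x -> rich i B A x.
Proof. intros Hx Hpoor. split; [exact Hx | intros Hn; apply Hpoor; split; auto]. Qed.

Lemma rich_A_of (W : K -> Prop) (x : K) :
  subset_of K W B -> A x -> ~ J (up_nbhd k W x) -> rich k A B x.
Proof.
  intros HW Hx Hpos. split; [exact Hx |]. intros Hnull. apply Hpos.
  apply (null_subset K J J_ideal _ _ Hnull), up_nbhd_mono, HW.
Qed.

Definition good_nbhd (a : K) (y : K) : Prop :=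
  up_nbhd k B a y /\ ~ (Y y \/ poor i B A y).

Lemma good_nbhd_positive (a : K) : rich k A B a -> ~ J (good_nbhd a).
Proof.
  intros [_ Ha]. apply positive_minus_null; [exact J_ideal | exact Ha |].
  apply null_union; [exact J_ideal | exact Y_null |].
  apply (poor_null B A); auto; intros x Hx; exact Hx.
Qed.

Lemma good_nbhd_core (a y : K) : good_nbhd a y -> V y.
Proof.
  intros [[_ [_ Hy]] Hout]. split.
  - right. apply rich_B_of; [exact Hy | intros Hp; apply Hout; right; exact Hp].
  - intros HY. apply Hout. left. exact HY.
Qed.

Lemma joined_to_rich_A (x : K) : V x -> exists a, rich k A B a /\ ~ Y a /\ joined x a.
Proof.
  intros [[Hx | Hx] HxY].
  - exists x. split; [exact Hx | split; [exact HxY | apply rt_refl]].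
  - destruct (positive_avoid K J J_ideal (up_nbhd i A x)
                (fun y => Y y \/ poor k A B y) (proj2 Hx)) as [a [[Hxa [Hc Ha]] Hout]].
    { apply null_union; [exact J_ideal | exact Y_null |].
      apply (poor_null A B); auto; intros y Hy; exact Hy. }
    assert (Ha_rich : rich k A B a).
    { split; [exact Ha | intros Hn; apply Hout; right; split; auto]. }
    assert (HaY : ~ Y a) by (intros HY; apply Hout; left; exact HY).
    exists a. split; [exact Ha_rich | split; [exact HaY |]].
    apply (joined_edge x a i); auto.
    + split; [right; exact Hx | exact HxY].
    + split; [left; exact Ha_rich | exact HaY].
Qed.

(* Two rich points a, a' of A are joined by a path a - w - v - w' - a' of
   colours k, i, k, k: w is a good k-neighbour of a, v is a point of A with
   positively many k-neighbours w' among the good k-neighbours of a', and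
   w < v with c(w, v) = i comes from the density of i. *)
Lemma rich_A_joined (a a' : K) :
  rich k A B a -> ~ Y a -> rich k A B a' -> ~ Y a' -> joined a a'.
Proof.
  intros Ha HaY Ha' Ha'Y.
  assert (HW : subset_of K (good_nbhd a') B) by (intros y [[_ [_ Hy]] _]; exact Hy).
  destruct (i_dense (good_nbhd a) (fun v => A v /\ ~ (Y v \/ poor k A (good_nbhd a') v)))
    as [w [v [Hw [[Hv Hvout] [Hwv Hcwv]]]]].
  - intros y [[_ [_ Hy]] _]. exact Hy.
  - intros y [Hy _]. exact Hy.
  - apply good_nbhd_positive, Ha.
  - apply positive_minus_null; [exact J_ideal | exact A_pos |].
    apply null_union; [exact J_ideal | exact Y_null |].
    apply (poor_null A B); auto; [intros y Hy; exact Hy | apply good_nbhd_positive, Ha'].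
  - assert (Hv_nbhd : ~ J (up_nbhd k (good_nbhd a') v))
      by (intros Hn; apply Hvout; right; split; auto).
    destruct (positive_inhabited K J J_ideal _ Hv_nbhd) as [w' [Hvw' [Hcvw' Hw']]].
    assert (Vv : V v).
    { split; [left; apply (rich_A_of (good_nbhd a')); auto |].
      intros HY. apply Hvout. left. exact HY. }
    assert (Va : V a) by (split; [left |]; assumption).
    assert (Va' : V a') by (split; [left |]; assumption).
    pose proof (good_nbhd_core a w Hw) as Vw.
    pose proof (good_nbhd_core a' w' Hw') as Vw'.
    destruct Hw as [[Haw [Hcaw _]] _]. destruct Hw' as [[Ha'w' [Hca'w' _]] _].
    eapply rt_trans; [apply (joined_edge a w k); auto |].
    eapply rt_trans; [apply (joined_edge w v i); auto |].
    eapply rt_trans; [apply (joined_edge v w' k); auto |].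
    apply joined_sym, (joined_edge a' w' k); auto.
Qed.

Lemma core_minus_null_connected :
  connected K (fun x => core x /\ ~ Y x) (colour_graph K lt c S).
Proof.
  intros x y Vx Vy.
  destruct (joined_to_rich_A x Vx) as [a [Ha [HaY Hxa]]].
  destruct (joined_to_rich_A y Vy) as [a' [Ha' [Ha'Y Hya']]].
  eapply rt_trans; [exact Hxa |].
  eapply rt_trans; [exact (rich_A_joined a a' Ha HaY Ha' Ha'Y) | exact (joined_sym _ _ Hya')].
Qed.

End RemoveNullSet.

(* By uniformity, the core has size kappa and its small subsets are null. *)
Lemma core_large : uniform K J -> card_le K (fullK K) core.
Proof.
  intros Huniform. apply NNPP. intros Hsmall. exact (core_positive (Huniform core Hsmall)).
Qed.

Lemma core_highly_connected :
  uniform K J -> highly_connected K core (colour_graph K lt c S).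
Proof.
  intros Huniform Y _ Hsmall. apply core_minus_null_connected, Huniform.
  intros [f [Hf Hinj]]. apply Hsmall. exists f. split.
  - intros x _. apply Hf. exact Logic.I.
  - intros x y _ _ Hxy. apply Hinj; [exact Logic.I | exact Logic.I | exact Hxy].
Qed.

End HighlyConnectedSet.

End Colouring.

(* Two distinct colours, containing both i and k. *)
Definition colour_pair (i k : nat) : list nat :=
  if Nat.eq_dec i k then [i; S i] else [i; k].

Lemma colour_pair_spec (i k : nat) :
  NoDup (colour_pair i k) /\ length (colour_pair i k) = 2 /\
  In i (colour_pair i k) /\ In k (colour_pair i k).
Proof.
  unfold colour_pair. destruct (Nat.eq_dec i k) as [Heq | Hne].
  - subst. repeat split; simpl; auto.
    constructor; [simpl; lia | constructor; [simpl; tauto | constructor]].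
  - repeat split; simpl; auto.
    constructor; [simpl; intuition | constructor; [simpl; tauto | constructor]].
Qed.

Theorem mainTheorem6 (K : Type) (lt : K -> K -> Prop) :
  regular_uncountable_cardinal K lt ->
  (exists I : (K -> Prop) -> Prop,
      is_ideal K I /\ uniform K I /\ normal K lt I /\ two_precipitous K lt I) ->
  hc_arrow K lt 2.
Proof.
  intros _ [J [J_ideal [J_uniform [J_normal J_prec]]]] c.
  assert (full_pos : ~ J (fullK K)) by apply J_ideal.
  (* a dense colour k from A1 to B1, then a dense colour i from B <= B1 to A <= A1 *)
  destruct (dense_colour_exists K lt J c (fullK K) (fullK K) J_prec full_pos full_pos)
    as [A1 [B1 [k [_ [_ [A1_pos [B1_pos k_dense]]]]]]].
  destruct (dense_colour_exists K lt J c B1 A1 J_prec B1_pos A1_pos)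
    as [B [A [i [HB [HA [B_pos [A_pos i_dense]]]]]]].
  destruct (colour_pair_spec i k) as [Hnodup [Hlen [Hi Hk]]].
  exists (core K lt J c A B i k), (colour_pair i k).
  split; [| split; [exact Hnodup | split; [exact Hlen |]]].
  - apply (core_large K lt J c J_ideal A B i k); auto.
    apply (dense_colour_mono K lt J c A B A1 B1); assumption.
  - apply core_highly_connected; auto.
    apply (dense_colour_mono K lt J c A B A1 B1); assumption.
Qed.
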